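(* Let $H$, $L$ be as in the context and let $(S,\mathcal T_0)$ be any feasible solution. Then $d(S,\mathcal T_0)\le d_{UB}:=\lfloor L/\omega(H)\rfloor$.
   Context: Notation: $[n)=\{0,1,\dots,n-1\}$. Let $M,N,Z$ be positive integers and let $H$ be a binary $MZ\times NZ$ matrix made of $M\times N$ blocks, each a $Z\times Z$ circulant; assume $H$ has no zero row and no two identical rows. For $\mathcal A\subseteq[MZ)$, $H_{\mathcal A}$ is the submatrix of rows indexed by $\mathcal A$ (in increasing order); $\omega(A)$ is the maximum Hamming weight of a column of $A$ (with $\omega$ of the empty matrix equal to $0$). For $i\in[MZ)$ and integer $s$, $\pi^s(i)=Z\lfloor i/Z\rfloor+((i+s)\bmod Z)$ and $\pi^s(\mathcal T)=\{\pi^s(x):x\in\mathcal T\}$. Fix an integer $L>1$. A pair $(S,\mathcal T_0)$ ($S$ a positive integer, $\mathcal T_0\subseteq[MZ)$) is a feasible solution if, with $\mathcal T_l=\pi^{lS}(\mathcal T_0)$ for $l\in[L)$, the sets $\mathcal T_0,\dots,\mathcal T_{L-1}$ are pairwise disjoint with union $[MZ)$. The layer distance $d(S,\mathcal T_0)$ is the largest $l\in[L)$ such that the matrix obtained by stacking $H_{\mathcal T_0},\dots,H_{\mathcal T_{l-1}}$ vertically has maximum column weight at most $1$ (for $l=0$ the stack is empty). *)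

From mathcomp Require Import all_boot all_algebra.
Set Implicit Arguments. Unset Strict Implicit. Unset Printing Implicit Defensive.

(* pi^s(i) = Z*floor(i/Z) + ((i+s) mod Z); shifts are nonnegative here (s = l*S). *)
Definition pi (Z s i : nat) : nat := Z * (i %/ Z) + (i + s) %% Z.

(* entry of a matrix at nat indices (false outside the range) *)
Definition entry (m n : nat) (H : 'M[bool]_(m, n)) (r c : nat) : bool :=
  match (insub r : option 'I_m), (insub c : option 'I_n) with
  | Some i, Some j => H i j
  | _, _ => false
  end.

(* H is made of M x N blocks, each a Z x Z circulant:
   within every block, entry (r+1 mod Z, c+1 mod Z) equals entry (r, c). *)
Definition circulant_blocks (M N Z : nat) (H : 'M[bool]_(M * Z, N * Z)) : Prop :=
  forall (i : 'I_(M * Z)) (j : 'I_(N * Z)), entry H (pi Z 1 i) (pi Z 1 j) = H i j.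

Definition no_zero_row (m n : nat) (H : 'M[bool]_(m, n)) : Prop :=
  forall i : 'I_m, exists j : 'I_n, H i j.

Definition distinct_rows (m n : nat) (H : 'M[bool]_(m, n)) : Prop :=
  forall i i' : 'I_m, (forall j : 'I_n, H i j = H i' j) -> i = i'.

Definition layer (m Z s : nat) (T0 : {set 'I_m}) : {set 'I_m} :=
  [set i : 'I_m | [exists x in T0, val i == pi Z s (val x)]].

Definition feasible (M Z L S : nat) (T0 : {set 'I_(M * Z)}) : Prop :=
  0 < S /\
  (forall l1 l2, l1 < L -> l2 < L -> l1 != l2 ->
     [disjoint layer Z (l1 * S) T0 & layer Z (l2 * S) T0]) /\
  \bigcup_(l < L) layer Z (l * S) T0 = [set: 'I_(M * Z)].

Definition colweight (m n : nat) (H : 'M[bool]_(m, n)) (A : {set 'I_m}) (j : 'I_n) : nat :=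
  #|[set i in A | H i j]|.

(* omega(H_A): maximum column weight (0 for an empty matrix) *)
Definition omega (m n : nat) (H : 'M[bool]_(m, n)) (A : {set 'I_m}) : nat :=
  \max_(j < n) colweight H A j.

Definition stack_ok (M N Z : nat) (H : 'M[bool]_(M * Z, N * Z)) (S : nat)
  (T0 : {set 'I_(M * Z)}) (l : nat) : bool :=
  [forall j : 'I_(N * Z), \sum_(k < l) colweight H (layer Z (k * S) T0) j <= 1].

Definition layer_distance (M N Z L : nat) (H : 'M[bool]_(M * Z, N * Z)) (S : nat)
  (T0 : {set 'I_(M * Z)}) : nat :=
  \max_(l < L | stack_ok H S T0 l) l.

From Pilot Require Import Defs.
From mathcomp Require Import all_boot all_algebra.

Set Implicit Arguments.
Unset Strict Implicit.
Unset Printing Implicit Defensive.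

Local Notation pi := Defs.pi.

(* Let w = omega(H) be attained in column j0, and let l be such that the
   stack of T_0, ..., T_(l-1) has column weights at most 1.  A simultaneous
   cyclic shift of rows and columns inside the blocks preserves H, and
   shifting T_0 by kS + mS is shifting T_m by kS.  Count the ones of column j0
   in the row sets pi^(kS+mS)(T_0), k < l, m < L.  For fixed k they form a
   shifted copy of the partition T_0, ..., T_(L-1), contributing w; for fixed
   m they form a shifted copy of the stack, contributing at most 1.  Hence
   l * w <= L. *)

Lemma entry_val m n (H : 'M[bool]_(m, n)) (i : 'I_m) (j : 'I_n) :
  entry H i j = H i j.
Proof. by rewrite /entry !valK. Qed.

Lemma colweightE m n (H : 'M[bool]_(m, n)) (A : {set 'I_m}) (j : 'I_n) :
  colweight H A j = \sum_(i in A) (H i j : nat).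
Proof.
rewrite /colweight -sum1dep_card big_mkcondr.
by apply: eq_bigr => i _; case: (H i j).
Qed.

Lemma colweight_partition m n (H : 'M[bool]_(m, n)) (I : finType)
    (F : I -> {set 'I_m}) (j : 'I_n) :
  (forall a b, a != b -> [disjoint F a & F b]) ->
  \sum_a colweight H (F a) j = colweight H (\bigcup_a F a) j.
Proof.
move=> disjF; rewrite colweightE partition_disjoint_bigcup //.
by apply: eq_bigr => a _; rewrite colweightE.
Qed.

Lemma omega_gt0 m n (H : 'M[bool]_(m, n)) :
  0 < m -> no_zero_row H -> 0 < omega H [set: 'I_m].
Proof.
move=> m_gt0 nzH; have [j Hj] := nzH (Ordinal m_gt0).
apply: leq_trans (leq_bigmax j); rewrite /colweight card_gt0.
by apply/set0Pn; exists (Ordinal m_gt0); rewrite !inE.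
Qed.

Section BlockShift.

Variables (Z : nat) (Z_gt0 : 0 < Z).

Lemma pi_ltn m s x : x < m * Z -> pi Z s x < m * Z.
Proof.
move=> x_lt; rewrite /pi.
have q_lt : x %/ Z < m by rewrite ltn_divLR.
have r_lt : (x + s) %% Z < Z by rewrite ltn_mod.
apply: leq_trans (_ : Z * (x %/ Z).+1 <= m * Z).
  by rewrite mulnS addnC ltn_add2r.
by rewrite mulnC leq_mul2r q_lt orbT.
Qed.

Lemma piD s t x : pi Z t (pi Z s x) = pi Z (s + t) x.
Proof.
rewrite /pi; have r_lt : (x + s) %% Z < Z by rewrite ltn_mod.
rewrite [Z * (x %/ Z)]mulnC divnMDl // (divn_small r_lt) addn0 mulnC.
by rewrite -addnA modnMDl modnDml addnA.
Qed.

Lemma pi_mulZ s x : pi Z (s * Z) x = x.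
Proof. by rewrite /pi [x + _]addnC modnMDl mulnC -divn_eq. Qed.

Lemma piK s : cancel (pi Z s) (pi Z (s * Z.-1)).
Proof.
by move=> x; rewrite piD -[s in s + _]muln1 -mulnDr add1n prednK ?pi_mulZ.
Qed.

Definition shift m s (i : 'I_(m * Z)) : 'I_(m * Z) :=
  Ordinal (pi_ltn s (ltn_ord i)).

Lemma shift_inj m s : injective (@shift m s).
Proof.
apply: (can_inj (g := shift (s * Z.-1))) => i.
by apply: val_inj; rewrite /= piK.
Qed.

Lemma shiftD m s t (i : 'I_(m * Z)) : shift t (shift s i) = shift (s + t) i.
Proof. by apply: val_inj; rewrite /= piD. Qed.

Lemma layerE m s (T0 : {set 'I_(m * Z)}) : layer Z s T0 = shift s @: T0.
Proof.
apply/setP => i; rewrite inE.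
apply/existsP/imsetP => [[x /andP [xT /eqP ix]] | [x xT ->]].
  by exists x => //; apply: val_inj.
by exists x; rewrite xT eqxx.
Qed.

Lemma layerD m s t (T0 : {set 'I_(m * Z)}) :
  layer Z (s + t) T0 = shift t @: layer Z s T0.
Proof.
rewrite !layerE -imset_comp; apply: eq_imset => x.
by apply: val_inj; rewrite /= piD.
Qed.

Variables (M N : nat) (H : 'M[bool]_(M * Z, N * Z)).
Hypothesis circH : circulant_blocks H.

Lemma circulant_shift t i j : H (shift t i) (shift t j) = H i j.
Proof.
elim: t => [|t IHt].
  by congr (H _ _); apply: val_inj; rewrite /= -(mul0n Z) pi_mulZ.
by rewrite -addn1 -!shiftD -[H (shift 1 _) _]entry_val circH.
Qed.

Lemma colweight_shift t (A : {set 'I_(M * Z)}) j :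
  colweight H (shift t @: A) (shift t j) = colweight H A j.
Proof.
rewrite !colweightE (reindex_inj (@shift_inj _ t)).
apply: eq_big => [i | i _]; last by rewrite circulant_shift.
by rewrite mem_imset //; apply: shift_inj.
Qed.

Lemma colweightT_shift t j :
  colweight H [set: 'I_(M * Z)] (shift t j) = colweight H [set: 'I_(M * Z)] j.
Proof.
rewrite !colweightE (reindex_inj (@shift_inj _ t)).
by apply: eq_big => [i | i _]; rewrite ?inE ?circulant_shift.
Qed.

Variables (L S : nat) (T0 : {set 'I_(M * Z)}).

Lemma sum_colweight_layers t j :
  feasible L S T0 ->
  \sum_(m < L) colweight H (layer Z (t + m * S) T0) (shift t j)
    = colweight H [set: 'I_(M * Z)] j.
Proof.
move=> [_ [disjT coverT]].
under eq_bigr do rewrite addnC layerD colweight_shift.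
rewrite colweight_partition ?coverT // => a b ab.
by apply: disjT; rewrite ?ltn_ord.
Qed.

Lemma stack_colweight_layers l t j :
  stack_ok H S T0 l ->
  \sum_(k < l) colweight H (layer Z (k * S + t) T0) (shift t j) <= 1.
Proof.
move=> /forallP stack_l.
by under eq_bigr do rewrite layerD colweight_shift; apply: stack_l.
Qed.

End BlockShift.

Theorem theorem6 (M N Z L : nat) (H : 'M[bool]_(M * Z, N * Z))
  (S : nat) (T0 : {set 'I_(M * Z)}) :
  0 < M -> 0 < N -> 0 < Z -> 1 < L ->
  circulant_blocks H -> no_zero_row H -> distinct_rows H ->
  feasible L S T0 ->
  layer_distance L H S T0 <= L %/ omega H [set: 'I_(M * Z)].
Proof.
move=> M_gt0 N_gt0 Z_gt0 _ circH nzH _ feasT.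
set w := omega H _.
have w_gt0 : 0 < w by apply: omega_gt0; rewrite ?muln_gt0 ?M_gt0.
have [j0 w_j0] : {j0 | w = colweight H [set: 'I_(M * Z)] j0}.
  by apply: eq_bigmax; rewrite card_ord muln_gt0 N_gt0.
have shift_onto t : exists j, j0 = shift Z_gt0 t j.
  by have /codomP [j ->] := injF_onto (@shift_inj _ Z_gt0 N t) j0; exists j.
apply/bigmax_leqP => l stack_l; rewrite leq_divRL //.
have rows_k k : w = \sum_(m < L) colweight H (layer Z (k * S + m * S) T0) j0.
  rewrite w_j0; have [j ->] := shift_onto (k * S).
  by rewrite sum_colweight_layers // colweightT_shift.
have stack_m m : \sum_(k < l) colweight H (layer Z (k * S + m * S) T0) j0 <= 1.
  by have [j ->] := shift_onto (m * S); apply: stack_colweight_layers.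
have -> : l * w = \sum_(k < l) w by rewrite sum_nat_const card_ord.
under eq_bigr => k _ do rewrite (rows_k k).
rewrite exchange_big; apply: (@leq_trans (\sum_(m < L) 1)).
  by apply: leq_sum => m _; apply: stack_m.
by rewrite sum_nat_const card_ord muln1.
Qed.
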